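(* There exists a divergent series of positive real terms $\sum_{n=1}^{\infty}y_n$ with $\lim_{n\to\infty}y_n=0$ such that $\{\sum_{n=1}^{\infty}(y_n-y_{\tau(n)}) : \tau\in S_\infty,\ \text{the series converges}\}=\mathbb{R}$.
   Context: $S_\infty$ denotes the set of all permutations of $\mathbb{N}$. *)

From Stdlib Require Import Reals.
Open Scope R_scope.

Definition is_perm_nat (tau : nat -> nat) : Prop :=
  (forall m n, tau m = tau n -> m = n) /\ (forall k, exists n, tau n = k).

Definition series_converges_to (a : nat -> R) (s : R) : Prop :=
  Un_cv (fun N => sum_f_R0 a N) s.

(* Block e of the sequence consists of 2(e+1)^2 terms alternating between
   1/(e+1) and 1/(2(e+1)^2); each block contributes more than 1, so the series
   diverges although y_n -> 0.  For x >= 0 the involution tau swaps the first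
   c_e ~ x(e+1) large terms of block e with the small terms one place further
   in block e+1 (for x < 0, small terms of block e with large ones of block
   e+1).  A swapped pair contributes +-w_e ~ +-1/(e+1) to the partial sums while
   it is open and nothing once closed.  Inside block e+1 the pairs coming from
   block e close exactly as fast as the new pairs open, so every partial sum
   lies within O(1/e) of c_e w_e ~ x. *)

From Stdlib Require Import Bool Reals Lia ZArith Lra Psatz.
Open Scope R_scope.

Ltac nat_lia := zify; rewrite ?Nat2Z.inj_div, ?Nat2Z.inj_mod in *; Z.div_mod_to_equations; lia.

Lemma Rabs_le_between a b : Rabs a <= b -> - b <= a <= b.
Proof. unfold Rabs; destruct (Rcase_abs a); intros; lra. Qed.

Lemma involutive_is_perm_nat (f : nat -> nat) : (forall n, f (f n) = n) -> is_perm_nat f.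
Proof.
  intros Hf. split.
  - intros m n Hmn. rewrite <- (Hf m), <- (Hf n), Hmn. reflexivity.
  - intros k. exists (f k). apply Hf.
Qed.

Definition block_len (e : nat) : nat := 2 * ((e + 1) * (e + 1)).

Fixpoint block_start (e : nat) : nat :=
  match e with 0 => 0%nat | S e' => (block_start e' + block_len e')%nat end.

Fixpoint decode (n : nat) : nat * nat :=
  match n with
  | 0 => (0, 0)%nat
  | S n' => let (e, j) := decode n' in
            if S j <? block_len e then (e, S j) else (S e, 0%nat)
  end.

Lemma block_len_ge_2 e : (2 <= block_len e)%nat.
Proof. unfold block_len. nia. Qed.

Lemma block_len_le_S e : (block_len e <= block_len (S e))%nat.
Proof. unfold block_len. nia. Qed.

Lemma INR_block_len e : INR (block_len e) = 2 * ((INR e + 1) * (INR e + 1)).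
Proof. unfold block_len. rewrite !mult_INR, plus_INR. simpl. ring. Qed.

Lemma block_len_pos e : 0 < INR (block_len e).
Proof. apply lt_0_INR. pose proof (block_len_ge_2 e). lia. Qed.

Lemma decode_lt n : (snd (decode n) < block_len (fst (decode n)))%nat.
Proof.
  induction n as [|n IH]; simpl.
  - pose proof (block_len_ge_2 0). lia.
  - destruct (decode n) as [e j]; simpl in *.
    destruct (S j <? block_len e) eqn:H; simpl.
    + apply Nat.ltb_lt in H. lia.
    + pose proof (block_len_ge_2 (S e)). lia.
Qed.

Lemma decode_spec n : (block_start (fst (decode n)) + snd (decode n))%nat = n.
Proof.
  induction n as [|n IH]; simpl; [reflexivity|].
  pose proof (decode_lt n) as V.
  destruct (decode n) as [e j]; simpl in *.
  destruct (S j <? block_len e) eqn:H; simpl.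
  - lia.
  - apply Nat.ltb_ge in H. lia.
Qed.

Lemma block_start_lt e1 e2 :
  (e1 < e2)%nat -> (block_start e1 + block_len e1 <= block_start e2)%nat.
Proof.
  induction e2 as [|e2 IH]; intros H; [lia|].
  simpl. destruct (Nat.eq_dec e1 e2) as [->|]; [lia|].
  specialize (IH ltac:(lia)). lia.
Qed.

Lemma block_start_ge e : (e <= block_start e)%nat.
Proof. induction e; simpl; [lia|]. pose proof (block_len_ge_2 e). lia. Qed.

Lemma decode_encode e j : (j < block_len e)%nat -> decode (block_start e + j) = (e, j).
Proof.
  intros Hj.
  pose proof (decode_lt (block_start e + j)) as V.
  pose proof (decode_spec (block_start e + j)) as Sp.
  destruct (decode (block_start e + j)) as [e' j']; simpl in *.
  destruct (lt_eq_lt_dec e e') as [[H|H]|H].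
  - pose proof (block_start_lt _ _ H). lia.
  - subst. f_equal. lia.
  - pose proof (block_start_lt _ _ H). lia.
Qed.

Lemma level_ge n e : (block_start e <= n)%nat -> (e <= fst (decode n))%nat.
Proof.
  intros H. pose proof (decode_spec n). pose proof (decode_lt n).
  destruct (decode n) as [e' j]; simpl in *.
  destruct (le_lt_dec e e') as [|Hl]; [assumption|].
  pose proof (block_start_lt _ _ Hl). lia.
Qed.

Lemma Un_cv_level_bound (u : nat -> R) (l M : R) (E : nat) :
  (1 <= E)%nat ->
  (forall n, (E <= fst (decode n))%nat -> Rabs (u n - l) <= M / INR (fst (decode n))) ->
  Un_cv u l.
Proof.
  intros HE Hu eps Heps.
  destruct (INR_unbounded (M / eps)) as [k Hk].
  exists (block_start (Nat.max E k)). intros n Hn. unfold R_dist.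
  apply level_ge in Hn.
  set (e := fst (decode n)) in *.
  assert (Hke : INR k <= INR e) by (apply le_INR; lia).
  assert (He1 : 1 <= INR e) by (change 1 with (INR 1); apply le_INR; lia).
  assert (HM : M < eps * INR k).
  { assert (M = M / eps * eps) by (field; lra). nra. }
  eapply Rle_lt_trans; [apply Hu; lia|].
  apply Rmult_lt_reg_r with (INR e); [lra|].
  unfold Rdiv. rewrite Rmult_assoc, Rinv_l by lra. nra.
Qed.

Definition y_val (e j : nat) : R :=
  if (j mod 2 =? 0)%nat then / INR (e + 1) else / INR (block_len e).

Definition y (n : nat) : R := y_val (fst (decode n)) (snd (decode n)).

Lemma INR_succ_le_block_len e : INR (e + 1) <= INR (block_len e).
Proof. apply le_INR. unfold block_len. nia. Qed.

Lemma y_val_pos e j : 0 < y_val e j.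
Proof.
  unfold y_val. destruct (j mod 2 =? 0)%nat; apply Rinv_0_lt_compat.
  - apply lt_0_INR; lia.
  - apply block_len_pos.
Qed.

Lemma y_val_le e j : y_val e j <= / INR (e + 1).
Proof.
  unfold y_val. destruct (j mod 2 =? 0)%nat; [lra|].
  apply Rinv_le_contravar; [apply lt_0_INR; lia | apply INR_succ_le_block_len].
Qed.

Lemma y_val_ge e j : / INR (block_len e) <= y_val e j.
Proof.
  unfold y_val. destruct (j mod 2 =? 0)%nat; [|lra].
  apply Rinv_le_contravar; [apply lt_0_INR; lia | apply INR_succ_le_block_len].
Qed.

Lemma y_pos n : 0 < y n.
Proof. apply y_val_pos. Qed.

Lemma y_cvg_0 : Un_cv y 0.
Proof.
  apply (Un_cv_level_bound y 0 1 1); [lia|].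
  intros n Hn. unfold y.
  rewrite Rminus_0_r, Rabs_right by (apply Rle_ge, Rlt_le, y_val_pos).
  eapply Rle_trans; [apply y_val_le|]. unfold Rdiv. rewrite Rmult_1_l.
  apply Rinv_le_contravar; [apply lt_0_INR; lia | apply le_INR; lia].
Qed.

Lemma sum_y_lower n :
  INR (fst (decode n)) + INR (S (snd (decode n))) / INR (block_len (fst (decode n)))
  <= sum_f_R0 y n.
Proof.
  unfold Rdiv. induction n as [|n IH].
  - change (sum_f_R0 y 0) with (y 0). unfold y. change (decode 0) with (0, 0)%nat.
    cbn [fst snd]. change (INR 0) with 0. change (INR 1) with 1.
    pose proof (y_val_ge 0 0). lra.
  - simpl sum_f_R0. unfold y at 2. pose proof (decode_lt n) as V. simpl decode.
    destruct (decode n) as [e j]; cbn [fst snd] in *.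
    destruct (S j <? block_len e) eqn:H; cbn [fst snd].
    + pose proof (y_val_ge e (S j)). rewrite S_INR with (n := S j). lra.
    + apply Nat.ltb_ge in H. assert (Hj : S j = block_len e) by lia. rewrite Hj in IH.
      rewrite Rinv_r in IH by (apply Rgt_not_eq, block_len_pos).
      pose proof (y_val_ge (S e) 0). rewrite S_INR with (n := e). simpl (INR 1). lra.
Qed.

Lemma sum_y_block_start e : INR e <= sum_f_R0 y (block_start e).
Proof.
  pose proof (sum_y_lower (block_start e)) as H.
  rewrite <- (Nat.add_0_r (block_start e)) in H.
  rewrite decode_encode in H by (pose proof (block_len_ge_2 e); lia).
  cbn [fst snd] in H. rewrite Nat.add_0_r in H.
  assert (0 <= INR 1 / INR (block_len e)).
  { unfold Rdiv. apply Rmult_le_pos;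
      [apply pos_INR | left; apply Rinv_0_lt_compat, block_len_pos]. }
  lra.
Qed.

Lemma y_not_summable : ~ exists s, series_converges_to y s.
Proof.
  intros [s Hs]. destruct (Hs 1 Rlt_0_1) as [N HN].
  destruct (INR_unbounded (s + 1)) as [k Hk].
  set (e := Nat.max N k).
  pose proof (block_start_ge e).
  specialize (HN (block_start e) ltac:(unfold e in *; lia)).
  pose proof (sum_y_block_start e).
  assert (INR k <= INR e) by (apply le_INR; unfold e; lia).
  unfold R_dist in HN. apply Rabs_def2 in HN. lra.
Qed.

Section Swap.

Variable p : nat.
Variable c : nat -> nat.

Definition opens (e j : nat) : bool := ((j mod 2 =? p) && (j / 2 <? c e))%nat.

Definition partner (e j : nat) : nat * nat :=
  if opens e j then (S e, S j) else
  match e, j with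
  | S e', S j' => if opens e' j' then (e', j') else (e, j)
  | _, _ => (e, j)
  end.

Definition tau (n : nat) : nat :=
  let q := partner (fst (decode n)) (snd (decode n)) in (block_start (fst q) + snd q)%nat.

Hypothesis p_le_1 : (p <= 1)%nat.
Hypothesis c_fits : forall e, (2 * c e + 2 <= block_len e)%nat.

Lemma opens_true e j : opens e j = true -> (j mod 2 = p /\ j / 2 < c e)%nat.
Proof.
  unfold opens; intros H. apply andb_true_iff in H as [H1 H2].
  apply Nat.eqb_eq in H1; apply Nat.ltb_lt in H2; auto.
Qed.

Lemma opens_false e j : opens e j = false -> (j mod 2 <> p \/ c e <= j / 2)%nat.
Proof.
  unfold opens; intros H. apply andb_false_iff in H as [H1|H2].
  - apply Nat.eqb_neq in H1; auto.
  - apply Nat.ltb_ge in H2; auto.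
Qed.

Lemma partner_lt e j :
  (j < block_len e)%nat -> (snd (partner e j) < block_len (fst (partner e j)))%nat.
Proof.
  intros Hj. unfold partner.
  destruct (opens e j) eqn:O.
  - apply opens_true in O. simpl. pose proof (c_fits e). pose proof (block_len_le_S e). nat_lia.
  - destruct e as [|e']; destruct j as [|j']; simpl; auto.
    destruct (opens e' j') eqn:O2; simpl; auto.
    apply opens_true in O2. pose proof (c_fits e'). nat_lia.
Qed.

Lemma partner_invol e j :
  (j < block_len e)%nat -> partner (fst (partner e j)) (snd (partner e j)) = (e, j).
Proof.
  intros Hj.
  destruct (opens e j) eqn:O.
  - assert (E : partner e j = (S e, S j)) by (unfold partner; rewrite O; auto).
    rewrite E; simpl. unfold partner.
    destruct (opens (S e) (S j)) eqn:O2.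
    + apply opens_true in O; apply opens_true in O2. exfalso. nat_lia.
    + rewrite O. reflexivity.
  - destruct e as [|e']; destruct j as [|j'];
      try (assert (E : partner _ _ = (_, _)) by (unfold partner; rewrite O; reflexivity);
           rewrite E; simpl; unfold partner; rewrite O; reflexivity).
    destruct (opens e' j') eqn:O2.
    + assert (E : partner (S e') (S j') = (e', j')) by (unfold partner; rewrite O, O2; reflexivity).
      rewrite E; simpl. unfold partner. rewrite O2. reflexivity.
    + assert (E : partner (S e') (S j') = (S e', S j'))
        by (unfold partner; rewrite O, O2; reflexivity).
      rewrite E; simpl. unfold partner. rewrite O, O2. reflexivity.
Qed.

Lemma decode_tau n : decode (tau n) = partner (fst (decode n)) (snd (decode n)).
Proof.
  unfold tau. pose proof (partner_lt _ _ (decode_lt n)) as V.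
  destruct (partner (fst (decode n)) (snd (decode n))) as [a b]. simpl in *.
  apply decode_encode; auto.
Qed.

Lemma tau_invol n : tau (tau n) = n.
Proof.
  unfold tau at 1. rewrite decode_tau, partner_invol by apply decode_lt.
  apply decode_spec.
Qed.

(* [nb_slots j] counts the positions i < j with i mod 2 = p. *)
Definition nb_slots (j : nat) : nat := ((j + 1 - p) / 2)%nat.

Definition carried (e : nat) : nat := match e with 0 => 0%nat | S e' => c e' end.

Definition pair_gap (e : nat) : R :=
  if (p =? 0)%nat then / INR (e + 1) - / INR (block_len (S e))
  else / INR (block_len e) - / INR (e + 2).

(* The carried pairs not yet closed contribute [pair_gap (e-1)] each, the
   pairs opened so far in block e contribute [pair_gap e] each. *)
Definition partial_sum_at (e j : nat) : R :=
  INR (carried e - Nat.min (carried e) (nb_slots j)) * pair_gap (pred e)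
  + INR (Nat.min (c e) (nb_slots (S j))) * pair_gap e.

Definition term_at (e j : nat) : R := y_val e j - y_val (fst (partner e j)) (snd (partner e j)).

Lemma pair_gap_spec e j : (j mod 2 = p)%nat -> y_val e j - y_val (S e) (S j) = pair_gap e.
Proof.
  intros H. unfold y_val, pair_gap.
  destruct (Nat.eq_dec p 0) as [->|Hp1].
  - rewrite H, Nat.eqb_refl.
    replace (S j mod 2 =? 0)%nat with false by (symmetry; apply Nat.eqb_neq; nat_lia).
    reflexivity.
  - replace (p =? 0)%nat with false by (symmetry; apply Nat.eqb_neq; auto).
    replace (j mod 2 =? 0)%nat with false by (symmetry; apply Nat.eqb_neq; nat_lia).
    replace (S j mod 2 =? 0)%nat with true by (symmetry; apply Nat.eqb_eq; nat_lia).
    replace (S e + 1)%nat with (e + 2)%nat by lia. reflexivity.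
Qed.

Lemma term_at_open e j : opens e j = true -> term_at e j = pair_gap e.
Proof.
  intros O. unfold term_at, partner. rewrite O. simpl.
  apply pair_gap_spec. apply opens_true in O; tauto.
Qed.

Lemma term_at_close e j : opens e j = true -> term_at (S e) (S j) = - pair_gap e.
Proof.
  intros O. unfold term_at, partner.
  destruct (opens (S e) (S j)) eqn:O2.
  - apply opens_true in O2; apply opens_true in O. exfalso; nat_lia.
  - rewrite O. simpl. rewrite <- (pair_gap_spec e j) by (apply opens_true in O; tauto). ring.
Qed.

Lemma term_at_fixed e j : opens e j = false ->
  (forall e' j', e = S e' -> j = S j' -> opens e' j' = false) -> term_at e j = 0.
Proof.
  intros O1 O2. unfold term_at, partner. rewrite O1.
  destruct e as [|e']; destruct j as [|j']; simpl; try ring.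
  rewrite (O2 e' j') by auto. simpl. ring.
Qed.

Lemma term_at_block_start e : term_at e 0 = INR (Nat.min (c e) (nb_slots 1)) * pair_gap e.
Proof.
  destruct (opens e 0) eqn:O.
  - rewrite term_at_open by auto. apply opens_true in O.
    replace (Nat.min (c e) (nb_slots 1)) with 1%nat by (unfold nb_slots; nat_lia). simpl; ring.
  - rewrite term_at_fixed; auto; [|intros; discriminate].
    apply opens_false in O.
    replace (Nat.min (c e) (nb_slots 1)) with 0%nat by (unfold nb_slots; nat_lia). simpl; ring.
Qed.

Lemma partial_sum_at_succ e j :
  (S j < block_len e)%nat -> partial_sum_at e (S j) = partial_sum_at e j + term_at e (S j).
Proof.
  intros Hj. unfold partial_sum_at.
  destruct (opens e (S j)) eqn:O.
  - rewrite term_at_open by auto. apply opens_true in O.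
    replace (nb_slots (S j)) with (nb_slots j) by (unfold nb_slots; nat_lia).
    replace (Nat.min (c e) (nb_slots (S (S j)))) with (S (Nat.min (c e) (nb_slots j)))
      by (unfold nb_slots; nat_lia).
    rewrite S_INR. ring.
  - destruct e as [|e'].
    + rewrite term_at_fixed by (auto; intros; discriminate). simpl carried.
      replace (Nat.min (c 0) (nb_slots (S (S j)))) with (Nat.min (c 0) (nb_slots (S j)))
        by (apply opens_false in O; unfold nb_slots; nat_lia).
      rewrite !Nat.min_0_l. ring.
    + destruct (opens e' j) eqn:O2.
      * rewrite term_at_close by auto. simpl carried. simpl pred. apply opens_true in O2.
        replace (c e' - Nat.min (c e') (nb_slots j))%nat
          with (S (c e' - Nat.min (c e') (nb_slots (S j)))) by (unfold nb_slots; nat_lia).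
        replace (Nat.min (c (S e')) (nb_slots (S (S j))))
          with (Nat.min (c (S e')) (nb_slots (S j))) by (unfold nb_slots; nat_lia).
        rewrite S_INR. ring.
      * rewrite term_at_fixed; auto;
          [|intros a b Ha Hb; injection Ha; injection Hb; intros; subst; auto].
        apply opens_false in O; apply opens_false in O2. simpl carried.
        replace (c e' - Nat.min (c e') (nb_slots (S j)))%nat
          with (c e' - Nat.min (c e') (nb_slots j))%nat by (unfold nb_slots; nat_lia).
        replace (Nat.min (c (S e')) (nb_slots (S (S j))))
          with (Nat.min (c (S e')) (nb_slots (S j))) by (unfold nb_slots; nat_lia).
        ring.
Qed.

(* All pairs carried into block e are closed by its last position. *)
Lemma partial_sum_at_next_block e j :
  (S j = block_len e)%nat -> partial_sum_at (S e) 0 = partial_sum_at e j + term_at (S e) 0.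
Proof.
  intros Hj. rewrite term_at_block_start. unfold partial_sum_at. simpl pred. simpl carried.
  pose proof (c_fits e).
  replace (carried e - Nat.min (carried e) (nb_slots j))%nat with 0%nat.
  2: { destruct e as [|e']; simpl; [lia|].
       pose proof (c_fits e'). pose proof (block_len_le_S e'). unfold nb_slots. nat_lia. }
  replace (Nat.min (c e) (nb_slots (S j))) with (c e) by (unfold nb_slots; nat_lia).
  replace (Nat.min (c e) (nb_slots 0)) with 0%nat by (unfold nb_slots; nat_lia).
  rewrite Nat.sub_0_r. simpl INR. ring.
Qed.

Lemma sum_swapped_diff n :
  sum_f_R0 (fun k => y k - y (tau k)) n = partial_sum_at (fst (decode n)) (snd (decode n)).
Proof.
  assert (Ht : forall k, y k - y (tau k) = term_at (fst (decode k)) (snd (decode k))).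
  { intros k. unfold y, term_at. rewrite decode_tau. reflexivity. }
  induction n as [|n IH].
  - simpl. rewrite Ht. simpl. rewrite term_at_block_start. unfold partial_sum_at. simpl. ring.
  - simpl sum_f_R0. rewrite IH, Ht. pose proof (decode_lt n) as V. simpl decode.
    destruct (decode n) as [e j]; simpl in *.
    destruct (S j <? block_len e) eqn:H; simpl.
    + apply Nat.ltb_lt in H. symmetry; apply partial_sum_at_succ; auto.
    + apply Nat.ltb_ge in H. symmetry; apply partial_sum_at_next_block; lia.
Qed.

End Swap.

Lemma two_level_sum_bound (c' c k k1 : nat) (w' w x B : R) :
  (c' <= c)%nat -> (k <= k1 <= k + 1)%nat ->
  Rabs (INR c' * w' - x) <= B -> INR c' * Rabs (w' - w) <= B -> Rabs w <= B ->
  Rabs (INR c * w - x) <= B ->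
  Rabs (INR (c' - Nat.min c' k) * w' + INR (Nat.min c k1) * w - x) <= 4 * B.
Proof.
  intros Hc Hk H1 H2 H3 H4.
  assert (0 <= INR c') by apply pos_INR.
  apply Rabs_le_between in H1, H3, H4.
  destruct (Nat.lt_ge_cases k c') as [Hl|Hl].
  - rewrite !Nat.min_r, minus_INR by lia.
    assert (Hk1 : INR k1 = INR k \/ INR k1 = INR k + 1).
    { destruct (Nat.eq_dec k1 k) as [->|]; [left; auto|].
      right; replace k1 with (S k) by lia; apply S_INR. }
    assert (0 <= INR k) by apply pos_INR.
    assert (INR k <= INR c') by (apply le_INR; lia).
    assert (Habs : INR k * Rabs (w' - w) <= B).
    { eapply Rle_trans; [|apply H2]. apply Rmult_le_compat_r; [apply Rabs_pos|auto]. }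
    assert (Hb : - B <= INR k * (w' - w) <= B).
    { destruct (Rle_dec 0 (w' - w)).
      - rewrite Rabs_right in Habs by lra. split; nra.
      - rewrite Rabs_left in Habs by lra. split; nra. }
    apply Rabs_le; destruct Hk1 as [E|E]; rewrite E; split; nra.
  - rewrite Nat.min_l, Nat.sub_diag by lia. simpl INR. rewrite Rmult_0_l, Rplus_0_l.
    assert (INR c' <= INR (Nat.min c k1) <= INR c) by (split; apply le_INR; lia).
    assert (Hb : - B <= INR c' * (w' - w) <= B).
    { destruct (Rle_dec 0 (w' - w)).
      - rewrite Rabs_right in H2 by lra. split; nra.
      - rewrite Rabs_left in H2 by lra. split; nra. }
    apply Rabs_le. destruct (Rle_dec 0 w); split; nra.
Qed.

Lemma count_mul_gap_approx (X q a r h : R) :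
  0 <= X -> 0 < q -> / q <= h -> 0 <= r -> q * r <= h ->
  X * q - 1 <= a <= X * q -> 0 <= a -> Rabs (a * (/ q - r) - X) <= (1 + X) * h.
Proof.
  intros. assert (Hq : q * / q = 1) by (field; lra).
  assert (0 < / q) by (apply Rinv_0_lt_compat; lra).
  assert (a * / q <= X) by nra.
  assert (X - / q <= a * / q) by nra.
  assert (a * r <= X * h) by nra.
  apply Rabs_le; split; nra.
Qed.

Lemma gap_abs_le (q r h : R) : 1 <= q -> / q <= h -> 0 <= r -> q * r <= h -> Rabs (/ q - r) <= h.
Proof.
  intros. assert (0 < / q) by (apply Rinv_0_lt_compat; lra).
  assert (r <= h) by nra.
  apply Rabs_le; split; lra.
Qed.

Lemma count_mul_gap_drift (X q a r r' h : R) :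
  0 <= X -> 1 <= q -> / q <= h -> 0 <= r -> 0 <= r' -> q * r <= h -> (q + 1) * r' <= h ->
  a <= X * q -> 0 <= a -> a * Rabs ((/ q - r) - (/ (q + 1) - r')) <= 3 * X * h.
Proof.
  intros. assert (Hq : q * / q = 1) by (field; lra).
  assert (0 < / q) by (apply Rinv_0_lt_compat; lra).
  assert (0 < / (q + 1)) by (apply Rinv_0_lt_compat; lra).
  assert (E : / q - / (q + 1) = / q * / (q + 1)) by (field; lra).
  assert (a * (/ q * / (q + 1)) <= X * h).
  { assert (/ (q + 1) <= / q) by (apply Rinv_le_contravar; lra).
    assert (a * / q <= X) by nra. nra. }
  assert (a * r <= X * h) by nra.
  assert (a * r' <= X * h) by nra.
  assert (Rabs ((/ q - r) - (/ (q + 1) - r')) <= / q * / (q + 1) + r + r')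
    by (apply Rabs_le; split; nra).
  nra.
Qed.

Definition floor_nat (r : R) : nat := Z.to_nat (Int_part r).

Lemma floor_nat_spec r : 0 <= r -> INR (floor_nat r) <= r < INR (floor_nat r) + 1.
Proof.
  intros H. destruct (base_Int_part r) as [H1 H2].
  assert (Hz : (-1 < Int_part r)%Z) by (apply lt_IZR; simpl; lra).
  unfold floor_nat. rewrite INR_IZR_INZ, Z2Nat.id by lia. lra.
Qed.

Lemma floor_nat_le r s : 0 <= r -> r <= s -> (floor_nat r <= floor_nat s)%nat.
Proof.
  intros H1 H2. pose proof (floor_nat_spec r H1). pose proof (floor_nat_spec s ltac:(lra)).
  assert (floor_nat r < S (floor_nat s))%nat by (apply INR_lt; rewrite S_INR; lra). lia.
Qed.

(* Pairs opened at even positions have positive gaps, at odd positions negative ones. *)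
Definition sign_index (x : R) : nat := if Rle_dec 0 x then 0%nat else 1%nat.

Definition sign (p : nat) : R := if (p =? 0)%nat then 1 else -1.

Definition start_level (x : R) : nat := (floor_nat (Rabs x) + 2)%nat.

Definition gap_denom (p d : nat) : R := INR d + 1 + INR p.

Definition gap_corr (p d : nat) : R :=
  if (p =? 0)%nat then / INR (block_len (S d)) else / INR (block_len d).

(* The magnitude of [pair_gap p d] is [/ gap_denom p d] up to [gap_corr p d = O(1/d^2)],
   so [pair_count x d] pairs of block d add up to [x] within O(1/d). *)
Definition pair_count (x : R) (e : nat) : nat :=
  if (start_level x <=? e)%nat then floor_nat (Rabs x * gap_denom (sign_index x) e) else 0%nat.

Lemma sign_index_le_1 x : (sign_index x <= 1)%nat.
Proof. unfold sign_index; destruct (Rle_dec 0 x); lia. Qed.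

Lemma sign_index_spec x : x = sign (sign_index x) * Rabs x.
Proof.
  unfold sign, sign_index. destruct (Rle_dec 0 x); simpl.
  - rewrite Rabs_right by lra. ring.
  - rewrite Rabs_left by lra. ring.
Qed.

Lemma Rabs_sign_mul p z : Rabs (sign p * z) = Rabs z.
Proof.
  unfold sign. rewrite Rabs_mult. destruct (p =? 0)%nat.
  - rewrite Rabs_R1. ring.
  - rewrite Rabs_left by lra. ring.
Qed.

Lemma gap_denom_bounds p d : (p <= 1)%nat -> INR d + 1 <= gap_denom p d <= INR d + 2.
Proof.
  intros. unfold gap_denom.
  assert (INR p <= 1) by (change 1 with (INR 1); apply le_INR; lia).
  pose proof (pos_INR p). lra.
Qed.

Lemma pair_gap_eq p d : (p <= 1)%nat -> pair_gap p d = sign p * (/ gap_denom p d - gap_corr p d).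
Proof.
  intros Hp. unfold pair_gap, sign, gap_denom, gap_corr.
  destruct (Nat.eq_dec p 0) as [->|H].
  - rewrite Nat.eqb_refl, plus_INR. simpl INR. rewrite Rplus_0_r. ring.
  - replace (p =? 0)%nat with false by (symmetry; apply Nat.eqb_neq; auto).
    replace p with 1%nat by lia. rewrite !plus_INR. simpl INR.
    replace (INR d + (1 + 1)) with (INR d + 1 + 1) by ring. ring.
Qed.

Lemma gap_corr_bounds p d :
  (p <= 1)%nat -> 0 <= gap_corr p d /\ gap_denom p d * gap_corr p d <= / (INR d + 1).
Proof.
  intros Hp. pose proof (pos_INR d) as Hd. unfold gap_corr, gap_denom.
  destruct (Nat.eq_dec p 0) as [->|H].
  - rewrite Nat.eqb_refl, INR_block_len, S_INR. simpl INR.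
    set (D := 2 * ((INR d + 1 + 1) * (INR d + 1 + 1))).
    assert (0 < D) by (unfold D; nra).
    assert (0 < / D) by (apply Rinv_0_lt_compat; lra).
    split; [lra|].
    assert (E : / (INR d + 1) - (INR d + 1 + 0) * / D
                = / (INR d + 1) * / D * (D - (INR d + 1) * (INR d + 1))) by (field; lra).
    assert (0 <= / (INR d + 1) * / D * (D - (INR d + 1) * (INR d + 1))).
    { repeat apply Rmult_le_pos; try (left; apply Rinv_0_lt_compat); unfold D; nra. }
    lra.
  - replace (p =? 0)%nat with false by (symmetry; apply Nat.eqb_neq; auto).
    replace p with 1%nat by lia. rewrite INR_block_len. simpl INR.
    set (D := 2 * ((INR d + 1) * (INR d + 1))).
    assert (0 < D) by (unfold D; nra).
    assert (0 < / D) by (apply Rinv_0_lt_compat; lra).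
    split; [lra|].
    assert (E : / (INR d + 1) - (INR d + 1 + 1) * / D
                = / (INR d + 1) * / D * (D - (INR d + 1) * (INR d + 1 + 1)))
      by (unfold D; field; lra).
    assert (0 <= / (INR d + 1) * / D * (D - (INR d + 1) * (INR d + 1 + 1))).
    { repeat apply Rmult_le_pos; try (left; apply Rinv_0_lt_compat); unfold D; nra. }
    lra.
Qed.

Lemma pair_count_spec x e : (start_level x <= e)%nat ->
  Rabs x * gap_denom (sign_index x) e - 1 <= INR (pair_count x e)
  <= Rabs x * gap_denom (sign_index x) e.
Proof.
  intros H. unfold pair_count.
  replace (start_level x <=? e)%nat with true by (symmetry; apply Nat.leb_le; auto).
  assert (0 <= Rabs x * gap_denom (sign_index x) e).
  { pose proof (gap_denom_bounds (sign_index x) e (sign_index_le_1 x)).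
    pose proof (pos_INR e). pose proof (Rabs_pos x). nra. }
  pose proof (floor_nat_spec _ H0). lra.
Qed.

Lemma pair_count_fits x e : (2 * pair_count x e + 2 <= block_len e)%nat.
Proof.
  destruct (le_lt_dec (start_level x) e) as [H|H].
  - pose proof (pair_count_spec x e H).
    pose proof (floor_nat_spec (Rabs x) (Rabs_pos x)).
    pose proof (gap_denom_bounds (sign_index x) e (sign_index_le_1 x)). pose proof (Rabs_pos x).
    assert (Hs : INR (start_level x) <= INR e) by (apply le_INR; auto).
    unfold start_level in Hs. rewrite plus_INR in Hs. simpl INR in Hs.
    assert (INR (pair_count x e + 1) <= INR ((e + 1) * (e + 1))).
    { rewrite mult_INR, !plus_INR. simpl INR. nra. }
    apply INR_le in H4. unfold block_len. lia.
  - unfold pair_count. replace (start_level x <=? e)%nat with false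
      by (symmetry; apply Nat.leb_gt; auto).
    pose proof (block_len_ge_2 e). lia.
Qed.

Lemma pair_count_le_S x e : (pair_count x e <= pair_count x (S e))%nat.
Proof.
  unfold pair_count.
  destruct (start_level x <=? e)%nat eqn:H1; destruct (start_level x <=? S e)%nat eqn:H2; try lia.
  - apply floor_nat_le.
    + pose proof (gap_denom_bounds (sign_index x) e (sign_index_le_1 x)).
      pose proof (pos_INR e). pose proof (Rabs_pos x). nra.
    + unfold gap_denom. rewrite S_INR. pose proof (Rabs_pos x). nra.
  - apply Nat.leb_le in H1; apply Nat.leb_gt in H2. lia.
Qed.

Section Approximation.

Variable x : R.

Lemma inv_gap_denom_le d : / gap_denom (sign_index x) d <= / (INR d + 1).
Proof.
  pose proof (gap_denom_bounds _ d (sign_index_le_1 x)). pose proof (pos_INR d).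
  apply Rinv_le_contravar; lra.
Qed.

Lemma pair_count_gap_approx d : (start_level x <= d)%nat ->
  Rabs (INR (pair_count x d) * pair_gap (sign_index x) d - x) <= (1 + Rabs x) * / (INR d + 1).
Proof.
  intros Hd. pose proof (sign_index_le_1 x) as Hp.
  pose proof (gap_denom_bounds _ d Hp). pose proof (gap_corr_bounds _ d Hp).
  pose proof (pair_count_spec x d Hd). pose proof (pos_INR (pair_count x d)).
  pose proof (inv_gap_denom_le d). pose proof (pos_INR d). pose proof (Rabs_pos x).
  pose proof (sign_index_spec x) as Hx.
  rewrite pair_gap_eq by exact Hp.
  set (p := sign_index x) in *. set (X := Rabs x) in *.
  replace (INR (pair_count x d) * (sign p * (/ gap_denom p d - gap_corr p d)) - x)
    with (sign p * (INR (pair_count x d) * (/ gap_denom p d - gap_corr p d) - X))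
    by (rewrite Hx at 3; ring).
  rewrite Rabs_sign_mul. apply count_mul_gap_approx; lra.
Qed.

Lemma pair_count_gap_drift d : (start_level x <= d)%nat ->
  INR (pair_count x d) * Rabs (pair_gap (sign_index x) d - pair_gap (sign_index x) (S d))
  <= 3 * Rabs x * / (INR d + 1).
Proof.
  intros Hd. pose proof (sign_index_le_1 x) as Hp.
  pose proof (gap_denom_bounds _ d Hp). pose proof (gap_corr_bounds _ d Hp).
  pose proof (gap_corr_bounds _ (S d) Hp).
  pose proof (pair_count_spec x d Hd). pose proof (pos_INR (pair_count x d)).
  pose proof (inv_gap_denom_le d). pose proof (pos_INR d). pose proof (Rabs_pos x).
  rewrite !pair_gap_eq by exact Hp.
  set (p := sign_index x) in *.
  assert (Hq : gap_denom p (S d) = gap_denom p d + 1) by (unfold gap_denom; rewrite S_INR; ring).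
  replace (sign p * (/ gap_denom p d - gap_corr p d)
           - sign p * (/ gap_denom p (S d) - gap_corr p (S d)))
    with (sign p * ((/ gap_denom p d - gap_corr p d) - (/ gap_denom p (S d) - gap_corr p (S d))))
    by ring.
  rewrite Rabs_sign_mul. rewrite Hq in *.
  assert (/ (INR (S d) + 1) <= / (INR d + 1))
    by (rewrite S_INR; apply Rinv_le_contravar; lra).
  apply count_mul_gap_drift; lra.
Qed.

Lemma pair_gap_abs_le d : Rabs (pair_gap (sign_index x) d) <= / (INR d + 1).
Proof.
  pose proof (sign_index_le_1 x) as Hp.
  pose proof (gap_denom_bounds _ d Hp). pose proof (gap_corr_bounds _ d Hp).
  pose proof (inv_gap_denom_le d). pose proof (pos_INR d).
  rewrite pair_gap_eq, Rabs_sign_mul by exact Hp. apply gap_abs_le; lra.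
Qed.

Lemma partial_sum_at_bound d j : (start_level x <= d)%nat ->
  Rabs (partial_sum_at (sign_index x) (pair_count x) (S d) j - x)
  <= 4 * (1 + 3 * Rabs x) / INR (S d).
Proof.
  intros Hd. pose proof (pos_INR d). pose proof (Rabs_pos x).
  assert (Hh : 0 < / (INR d + 1)) by (apply Rinv_0_lt_compat; lra).
  assert (Hh' : 0 < / (INR (S d) + 1)) by (apply Rinv_0_lt_compat; rewrite S_INR; lra).
  assert (/ (INR (S d) + 1) <= / (INR d + 1))
    by (rewrite S_INR; apply Rinv_le_contravar; lra).
  unfold Rdiv. rewrite S_INR, Rmult_assoc.
  unfold partial_sum_at. simpl pred. simpl carried.
  apply two_level_sum_bound.
  - apply pair_count_le_S.
  - unfold nb_slots. nat_lia.
  - eapply Rle_trans; [apply pair_count_gap_approx; exact Hd | nra].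
  - eapply Rle_trans; [apply pair_count_gap_drift; exact Hd | nra].
  - eapply Rle_trans; [apply pair_gap_abs_le | nra].
  - eapply Rle_trans; [apply pair_count_gap_approx; lia | nra].
Qed.

Lemma sum_swapped_diff_cvg :
  series_converges_to (fun n => y n - y (tau (sign_index x) (pair_count x) n)) x.
Proof.
  apply (Un_cv_level_bound _ x (4 * (1 + 3 * Rabs x)) (S (start_level x))); [lia|].
  intros n Hn.
  rewrite sum_swapped_diff by (apply sign_index_le_1 || apply pair_count_fits).
  pose proof (decode_lt n). destruct (decode n) as [e j]; simpl in *.
  destruct e as [|d]; [lia|]. apply partial_sum_at_bound. lia.
Qed.

End Approximation.

Theorem mainTheorem6 :
  exists y : nat -> R,
    (forall n, 0 < y n) /\
    Un_cv y 0 /\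
    ~ (exists s, series_converges_to y s) /\
    (forall x : R, exists tau : nat -> nat,
        is_perm_nat tau /\ series_converges_to (fun n => y n - y (tau n)) x).
Proof.
  exists y. split; [exact y_pos|]. split; [exact y_cvg_0|]. split; [exact y_not_summable|].
  intros x. exists (tau (sign_index x) (pair_count x)). split.
  - apply involutive_is_perm_nat. intros n.
    apply tau_invol; [apply sign_index_le_1 | apply pair_count_fits].
  - apply sum_swapped_diff_cvg.
Qed.
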